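(* Let $\gamma>0$, $\tau>3$, $\alpha\in D_{\gamma,\tau}$, and let $p_n/q_n$ be the convergents of $\alpha$; for even $n$ let $I_n:=\left(\frac{p_n}{q_n},\frac{p_{n+2}}{q_{n+2}}\right)$. There exists $N_1\in\mathbb{N}$ such that for every even $n>N_1$ and every rational $p/q$ ($q\in\mathbb{N}$): $$\frac{p}{q}\in I_n,\ q<q_{n+2}\ \Longrightarrow\ \frac{p}{q}+\frac{\gamma}{q^{\tau+1}}<\frac{p_{n+2}}{q_{n+2}}-\frac{\gamma}{q_{n+2}^{\tau+1}}-\frac{2\gamma}{q_{n+2}^{\tau-1}}.$$
   Context: For $x\in\mathbb{R}$, $\|x\|:=\min_{p\in\mathbb{Z}}|x-p|$; $\mathbb{N}=\{1,2,\dots\}$. For $\gamma>0,\tau\ge1$, $D_{\gamma,\tau}:=\{\alpha\in(0,1): \|q\alpha\|\ge\gamma/q^\tau\ \forall q\in\mathbb{N}\}$; its elements are irrational. For irrational $\alpha\in(0,1)$ write $\alpha=\cfrac{1}{a_1+\cfrac{1}{a_2+\cdots}}$, and let $p_n/q_n$ ($n\ge0$) be its convergents: $p_{-1}=1,q_{-1}=0,p_0=0,q_0=1$, $p_n=a_np_{n-1}+p_{n-2}$, $q_n=a_nq_{n-1}+q_{n-2}$. *)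

From Stdlib Require Import Reals ZArith Arith.
Open Scope R_scope.

(* ||x|| = min_{p in Z} |x - p| : the nearest integer is floor x or floor x + 1. *)
Definition distZ (x : R) : R :=
  Rmin (Rabs (x - IZR (Int_part x))) (Rabs (x - IZR (Int_part x + 1))).

Definition Dgt (gamma tau alpha : R) : Prop :=
  0 < alpha < 1 /\
  forall q : nat, (1 <= q)%nat -> distZ (INR q * alpha) >= gamma / Rpower (INR q) tau.

Fixpoint cf_x (alpha : R) (n : nat) : R :=
  match n with
  | O => alpha
  | S m => / cf_x alpha m - IZR (Int_part (/ cf_x alpha m))
  end.

(* partial quotients a_n, n >= 1: a_{n} = floor(1 / x_{n-1}) *)
Definition cf_a (alpha : R) (n : nat) : Z := Int_part (/ cf_x alpha (n - 1)).

(* cf_pq alpha n = ((p_{n-1}, q_{n-1}), (p_n, q_n)) *)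
Fixpoint cf_pq (alpha : R) (n : nat) : (Z * Z) * (Z * Z) :=
  match n with
  | O => ((1%Z, 0%Z), (0%Z, 1%Z))
  | S m =>
      let '((pm, qm), (p, q)) := cf_pq alpha m in
      ((p, q), (cf_a alpha (S m) * p + pm, cf_a alpha (S m) * q + qm)%Z)
  end.

Definition cf_p (alpha : R) (n : nat) : Z := fst (snd (cf_pq alpha n)).
Definition cf_q (alpha : R) (n : nat) : Z := snd (snd (cf_pq alpha n)).

(* Write k := p_{n+2} q - p q_{n+2} >= 1, so that p_{n+2}/q_{n+2} - p/q = k/(q q_{n+2}).
   Since p/q lies strictly between the Farey neighbours p_n/q_n and p_{n+1}/q_{n+1}, we have
   q >= q_n + q_{n+1}; moreover k = 1 forces q_{n+2} = q_{n+1} + q < 2q.  The Diophantine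
   condition at q_{n+1} gives gamma q_{n+2} <= q_{n+1}^tau <= q^tau, which handles k >= 2,
   while for k = 1 the bound q > q_{n+2}/2 suffices once q_{n+2}^(tau-3) >= 2^(tau+1) gamma.
   Either way gamma/q^(tau+1) <= (k - 1/2)/(q q_{n+2}), and the two error terms at q_{n+2}
   are smaller than 1/(2 q q_{n+2}) once q_{n+2} is large, which holds for n large since
   q_n >= n. *)

From Stdlib Require Import Reals ZArith Arith Lia Lra.
Open Scope R_scope.

Lemma Rpower_pos (x y : R) : 0 < Rpower x y.
Proof. apply exp_pos. Qed.

Lemma Rpower_eventually_ge (c s : R) :
  0 < c -> 0 < s -> exists N : nat, forall x, INR N < x -> c <= Rpower x s.
Proof.
  intros Hc Hs.
  set (M := Rpower c (/ s)).
  assert (HMs : Rpower M s = c).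
  { unfold M; rewrite Rpower_mult, Rinv_l by lra; apply Rpower_1, Hc. }
  exists (Z.to_nat (up M)); intros x Hx.
  destruct (archimed M) as [HupM _].
  assert (HM : 0 < M) by apply Rpower_pos.
  assert (Hup : IZR (up M) <= INR (Z.to_nat (up M))).
  { rewrite INR_IZR_INZ; apply IZR_le; lia. }
  rewrite <- HMs; apply Rle_Rpower_l; lra.
Qed.

Lemma distZ_le (x : R) (z : Z) : distZ x <= Rabs (x - IZR z).
Proof.
  unfold distZ; destruct (base_Int_part x) as [Hlo Hhi].
  destruct (Z_le_gt_dec z (Int_part x)) as [Hz | Hz].
  - apply IZR_le in Hz; eapply Rle_trans; [apply Rmin_l |].
    rewrite !Rabs_right; lra.
  - assert (Hz' : (Int_part x + 1 <= z)%Z) by lia.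
    apply IZR_le in Hz'; rewrite plus_IZR in *.
    eapply Rle_trans; [apply Rmin_r |].
    rewrite !Rabs_left1; lra.
Qed.

Lemma IZR_frac_lt (a b c d : Z) :
  (0 < b)%Z -> (0 < d)%Z -> IZR a / IZR b < IZR c / IZR d -> (a * d < c * b)%Z.
Proof.
  intros Hb Hd H; apply IZR_lt in Hb; apply IZR_lt in Hd.
  apply lt_IZR; rewrite !mult_IZR.
  replace (IZR a * IZR d) with (IZR a / IZR b * (IZR b * IZR d)) by (field; lra).
  replace (IZR c * IZR b) with (IZR c / IZR d * (IZR b * IZR d)) by (field; lra).
  apply Rmult_lt_compat_r; nra.
Qed.

Lemma IZR_frac_sub (a b c d : Z) :
  (0 < b)%Z -> (0 < d)%Z ->
  IZR c / IZR d - IZR a / IZR b = IZR (c * b - a * d) / (IZR b * IZR d).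
Proof.
  intros Hb Hd; apply IZR_lt in Hb; apply IZR_lt in Hd.
  rewrite minus_IZR, !mult_IZR; field; lra.
Qed.

Definition cf_det (al : R) (k : nat) : Z :=
  (cf_p al (S k) * cf_q al k - cf_p al k * cf_q al (S k))%Z.

Section ContinuedFraction.

Variable al : R.
Hypothesis Hal : 0 < al < 1.

Lemma cf_x_range (k : nat) : 0 <= cf_x al k < 1.
Proof.
  destruct k as [| k]; simpl; [lra |].
  destruct (base_fp (/ cf_x al k)) as [Hlo Hhi]; unfold frac_part in *; lra.
Qed.

Lemma cf_a_S (k : nat) : cf_a al (S k) = Int_part (/ cf_x al k).
Proof. unfold cf_a; now rewrite Nat.sub_succ, Nat.sub_0_r. Qed.

Lemma cf_x_S (k : nat) : cf_x al (S k) = / cf_x al k - IZR (cf_a al (S k)).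
Proof. now rewrite cf_a_S. Qed.

(* Holds even when the expansion terminates, since then [/ 0 = 0]. *)
Lemma cf_a_nonneg (k : nat) : (0 <= cf_a al (S k))%Z.
Proof.
  rewrite cf_a_S; destruct (base_Int_part (/ cf_x al k)) as [_ Hhi].
  assert (Hinv : 0 <= / cf_x al k).
  { destruct (cf_x_range k) as [[Hpos | Hzero] _].
    - left; apply Rinv_0_lt_compat, Hpos.
    - rewrite <- Hzero, Rinv_0; lra. }
  enough (Hint : -1 < IZR (Int_part (/ cf_x al k))) by (apply lt_IZR in Hint; lia).
  lra.
Qed.

Lemma cf_a_ge1 (k : nat) : 0 < cf_x al k -> (1 <= cf_a al (S k))%Z.
Proof.
  intros Hx; rewrite cf_a_S; destruct (base_Int_part (/ cf_x al k)) as [_ Hhi].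
  assert (Hinv : 1 < / cf_x al k).
  { rewrite <- Rinv_1; apply Rinv_lt_contravar; destruct (cf_x_range k); nra. }
  enough (Hint : 0 < IZR (Int_part (/ cf_x al k))) by (apply lt_IZR in Hint; lia).
  lra.
Qed.

Lemma cf_p_SS (k : nat) :
  cf_p al (S (S k)) = (cf_a al (S (S k)) * cf_p al (S k) + cf_p al k)%Z.
Proof. unfold cf_p; simpl; now destruct (cf_pq al k) as [[] []]. Qed.

Lemma cf_q_SS (k : nat) :
  cf_q al (S (S k)) = (cf_a al (S (S k)) * cf_q al (S k) + cf_q al k)%Z.
Proof. unfold cf_q; simpl; now destruct (cf_pq al k) as [[] []]. Qed.

Lemma cf_q_pos (k : nat) : (1 <= cf_q al k)%Z.
Proof.
  enough (H : (1 <= cf_q al k)%Z /\ (1 <= cf_q al (S k))%Z) by apply H.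
  induction k as [| k IH].
  - change ((1 <= 1)%Z /\ (1 <= cf_a al 1 * 1 + 0)%Z).
    pose proof (cf_a_ge1 0 (proj1 Hal)); lia.
  - split; [apply IH |]; rewrite cf_q_SS.
    pose proof (cf_a_nonneg (S k)); nia.
Qed.

Lemma cf_q_ge_index (k : nat) :
  (forall j, 0 < cf_x al j) -> (Z.of_nat k <= cf_q al k)%Z.
Proof.
  intros Hx.
  enough (H : (Z.of_nat k <= cf_q al k)%Z /\ (Z.of_nat (S k) <= cf_q al (S k))%Z)
    by apply H.
  induction k as [| k IH].
  - pose proof (cf_q_pos 0); pose proof (cf_q_pos 1); lia.
  - split; [apply IH |]; rewrite cf_q_SS.
    pose proof (cf_a_ge1 (S k) (Hx (S k))); pose proof (cf_q_pos k).
    assert (cf_q al (S k) <= cf_a al (S (S k)) * cf_q al (S k))%Z by nia; lia.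
Qed.

Lemma cf_complete_quotient (k : nat) :
  (forall j, (j <= k)%nat -> 0 < cf_x al j) ->
  al * (IZR (cf_q al (S k)) + cf_x al (S k) * IZR (cf_q al k))
  = IZR (cf_p al (S k)) + cf_x al (S k) * IZR (cf_p al k).
Proof.
  induction k as [| k IH]; intros Hx.
  - change (al * (IZR (cf_a al 1 * 1 + 0) + cf_x al 1 * 1)
            = IZR (cf_a al 1 * 0 + 1) + cf_x al 1 * 0).
    rewrite cf_x_S, !plus_IZR, !mult_IZR; simpl; field; lra.
  - set (x := cf_x al (S k)) in *.
    assert (Hxpos : 0 < x) by (apply Hx; lia).
    assert (Hstep : forall u v : Z,
               IZR (cf_a al (S (S k)) * u + v) + cf_x al (S (S k)) * IZR u
               = (IZR u + x * IZR v) / x).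
    { intros u v; rewrite cf_x_S, plus_IZR, mult_IZR; fold x; field; lra. }
    rewrite cf_p_SS, cf_q_SS, !Hstep; unfold Rdiv.
    rewrite <- Rmult_assoc, IH by (intros j Hj; apply Hx; lia); reflexivity.
Qed.

End ContinuedFraction.

Lemma cf_det_S (al : R) (k : nat) : cf_det al (S k) = (- cf_det al k)%Z.
Proof. unfold cf_det; rewrite cf_p_SS, cf_q_SS; ring. Qed.

Lemma cf_det_parity (al : R) (k : nat) :
  cf_det al k = if Nat.even k then 1%Z else (-1)%Z.
Proof.
  induction k as [| k IH].
  - unfold cf_det; change ((cf_a al 1 * 0 + 1) * 1 - 0 * (cf_a al 1 * 1 + 0) = 1)%Z; ring.
  - rewrite cf_det_S, IH, Nat.even_succ, <- Nat.negb_even.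
    destruct (Nat.even k); reflexivity.
Qed.

Lemma cf_convergent_error (al : R) (k : nat) :
  0 < al < 1 -> (forall j, (j <= k)%nat -> 0 < cf_x al j) ->
  Rabs (IZR (cf_q al k) * al - IZR (cf_p al k))
  = / (IZR (cf_q al (S k)) + cf_x al (S k) * IZR (cf_q al k)).
Proof.
  intros Hal Hx.
  set (D := IZR (cf_q al (S k)) + cf_x al (S k) * IZR (cf_q al k)).
  assert (HD : 0 < D).
  { pose proof (IZR_le _ _ (cf_q_pos al Hal k)).
    pose proof (IZR_le _ _ (cf_q_pos al Hal (S k))).
    pose proof (cf_x_range al Hal (S k)); unfold D; nra. }
  assert (Hdet : (IZR (cf_q al k) * al - IZR (cf_p al k)) * D = IZR (cf_det al k)).
  { unfold cf_det; rewrite minus_IZR, !mult_IZR.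
    transitivity (IZR (cf_q al k) * (al * D) - IZR (cf_p al k) * D); [ring |].
    unfold D; rewrite cf_complete_quotient by assumption; ring. }
  assert (Habs : Rabs (IZR (cf_det al k)) = 1).
  { rewrite Rabs_Zabs, cf_det_parity; now destruct (Nat.even k). }
  apply (Rmult_eq_reg_r D); [| lra].
  rewrite Rinv_l, <- Habs, <- Hdet, Rabs_mult, (Rabs_pos_eq D) by lra.
  reflexivity.
Qed.

Section Diophantine.

Variables gamma tau al : R.
Hypothesis Hgamma : 0 < gamma.
Hypothesis HD : Dgt gamma tau al.

Lemma Dgt_distZ_ge (q : Z) :
  (1 <= q)%Z -> gamma / Rpower (IZR q) tau <= distZ (IZR q * al).
Proof.
  intros Hq; destruct HD as [_ Hdist].
  specialize (Hdist (Z.to_nat q) ltac:(lia)).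
  rewrite INR_IZR_INZ, Z2Nat.id in Hdist by lia; lra.
Qed.

Lemma Dgt_cf_x_pos (k : nat) : 0 < cf_x al k.
Proof.
  destruct HD as [Hal _].
  enough (H : forall j, (j <= k)%nat -> 0 < cf_x al j) by (apply H; lia).
  induction k as [| k IH]; intros j Hj.
  - replace j with 0%nat by lia; exact (proj1 Hal).
  - destruct (Nat.eq_dec j (S k)) as [-> | Hne]; [| apply IH; lia].
    destruct (cf_x_range al Hal (S k)) as [[Hpos | Hzero] _]; [exact Hpos | exfalso].
    (* a terminating expansion would make p_{k+1}/q_{k+1} equal to alpha *)
    pose proof (cf_complete_quotient al Hal k IH) as Hid.
    rewrite <- Hzero, !Rmult_0_l, !Rplus_0_r, Rmult_comm in Hid.
    pose proof (Dgt_distZ_ge _ (cf_q_pos al Hal (S k))) as Hlow.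
    pose proof (distZ_le (IZR (cf_q al (S k)) * al) (cf_p al (S k))) as Hup.
    rewrite Hid in Hlow, Hup; rewrite Rminus_diag, Rabs_R0 in Hup.
    pose proof (Rpower_pos (IZR (cf_q al (S k))) tau).
    assert (0 < gamma / Rpower (IZR (cf_q al (S k))) tau) by (apply Rdiv_lt_0_compat; lra).
    lra.
Qed.

Lemma Dgt_convergent_bound (k : nat) :
  gamma * IZR (cf_q al (S k)) <= Rpower (IZR (cf_q al k)) tau.
Proof.
  destruct HD as [Hal _].
  set (A := Rpower (IZR (cf_q al k)) tau).
  set (B := IZR (cf_q al (S k))).
  assert (HA : 0 < A) by apply Rpower_pos.
  assert (HB : 1 <= B) by (apply IZR_le, cf_q_pos, Hal).
  assert (Herr : gamma / A <= / B).
  { eapply Rle_trans; [apply Dgt_distZ_ge, cf_q_pos, Hal |].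
    eapply Rle_trans; [apply (distZ_le _ (cf_p al k)) |].
    rewrite cf_convergent_error by (auto using Dgt_cf_x_pos).
    apply Rinv_le_contravar; [lra |].
    pose proof (IZR_le _ _ (cf_q_pos al Hal k)).
    pose proof (cf_x_range al Hal (S k)); fold B; nra. }
  apply (Rmult_le_compat_r (A * B)) in Herr; [| nra].
  replace (gamma / A * (A * B)) with (gamma * B) in Herr by (field; lra).
  replace (/ B * (A * B)) with A in Herr by (field; lra).
  exact Herr.
Qed.

End Diophantine.

Lemma farey_denominator_ge (a b c d p q : Z) :
  (0 < b)%Z -> (0 < d)%Z -> (c * b - a * d = 1)%Z ->
  (a * q < p * b)%Z -> (p * d < c * q)%Z -> (b + d <= q)%Z.
Proof.
  intros Hb Hd Hdet Hl Hr.
  assert (Hq : q = (b * (c * q - p * d) + d * (p * b - a * q))%Z).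
  { transitivity (q * (c * b - a * d))%Z; [rewrite Hdet |]; ring. }
  nia.
Qed.

(* e/f is then the mediant of p/q and c/d, i.e. f = q + d. *)
Lemma farey_left_unit_gap (c d e f p q : Z) :
  (0 < d < q)%Z -> (q < f)%Z -> (c * f - e * d = 1)%Z -> (e * q - p * f = 1)%Z ->
  (f < 2 * q)%Z.
Proof.
  intros Hd Hqf Hdet Hgap.
  assert (Hm : ((c * q - p * d) * f = d + q)%Z).
  { transitivity (d * (e * q - p * f) + q * (c * f - e * d))%Z; [ring |].
    rewrite Hdet, Hgap; ring. }
  assert (Hm1 : (c * q - p * d = 1)%Z) by nia.
  rewrite Hm1 in Hm; lia.
Qed.

Lemma convergent_gap_numerator (P0 Q0 P1 Q1 P2 Q2 p q : Z) :
  (0 < Q0)%Z -> (0 < Q1)%Z -> (0 < q < Q2)%Z ->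
  (P1 * Q0 - P0 * Q1 = 1)%Z -> (P2 * Q1 - P1 * Q2 = -1)%Z ->
  (P0 * q < p * Q0)%Z -> (p * Q2 < P2 * q)%Z ->
  (Q1 < q)%Z /\
  ((P2 * q - p * Q2 = 1 /\ Q2 < 2 * q)%Z \/ (2 <= P2 * q - p * Q2)%Z).
Proof.
  intros HQ0 HQ1 Hq D1 D2 Hlo Hhi.
  assert (Hright : (p * Q1 < P1 * q)%Z).
  { assert (E : ((P1 * q - p * Q1) * Q2 = (P2 * q - p * Q2) * Q1 + q)%Z).
    { transitivity ((P2 * q - p * Q2) * Q1 - q * (P2 * Q1 - P1 * Q2))%Z; [ring |].
      rewrite D2; ring. }
    nia. }
  pose proof (farey_denominator_ge P0 Q0 P1 Q1 p q HQ0 HQ1 D1 Hlo Hright).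
  split; [lia |].
  destruct (Z.eq_dec (P2 * q - p * Q2) 1) as [Hk | Hk]; [left | right; lia].
  split; [exact Hk |].
  apply (farey_left_unit_gap P1 Q1 P2 Q2 p q); lia.
Qed.

Lemma Rpower_plus_nat (x s : R) (m : nat) :
  0 < x -> Rpower x (s + INR m) = Rpower x s * x ^ m.
Proof. intros Hx; now rewrite Rpower_plus, Rpower_pow. Qed.

Lemma gap_tail_lt (g t q Q : R) :
  0 < g -> 1 <= q < Q -> 16 * g <= Rpower Q (t - 3) ->
  g / Rpower Q (t + 1) + 2 * g / Rpower Q (t - 1) < / (2 * (q * Q)).
Proof.
  intros Hg Hq HW.
  set (W := Rpower Q (t - 3)).
  assert (HW0 : 0 < W) by apply Rpower_pos.
  replace (t + 1) with (t - 3 + INR 4) by (simpl; ring).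
  replace (t - 1) with (t - 3 + INR 2) by (simpl; ring).
  rewrite !Rpower_plus_nat by lra; fold W.
  set (v := / (Q * Q)).
  assert (Hv : 0 < v <= 1) by (split; [apply Rinv_0_lt_compat | rewrite <- Rinv_1;
                                        apply Rinv_le_contravar]; nra).
  assert (Hr : 0 < g / W <= / 16).
  { split; [apply Rdiv_lt_0_compat; lra |].
    apply (Rmult_le_reg_r (16 * W)); [lra |].
    replace (g / W * (16 * W)) with (16 * g) by (field; lra).
    replace (/ 16 * (16 * W)) with W by field; exact HW. }
  assert (Hlhs : g / (W * Q ^ 4) + 2 * g / (W * Q ^ 2) = g / W * (v * v + 2 * v)).
  { unfold v; field; lra. }
  assert (Hrhs : / 2 * v < / (2 * (q * Q))).
  { unfold v; rewrite <- Rinv_mult; apply Rinv_lt_contravar;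
      [apply Rmult_lt_0_compat |]; nra. }
  rewrite Hlhs; nra.
Qed.

Lemma main_term_le (g t q Q k : R) :
  0 < q -> 0 < Q -> g * Q <= (k - / 2) * Rpower q t ->
  g / Rpower q (t + 1) <= (k - / 2) / (q * Q).
Proof.
  intros Hq HQ Hcond.
  set (A := Rpower q t).
  assert (HA : 0 < A) by apply Rpower_pos.
  rewrite Rpower_plus, Rpower_1 by exact Hq; fold A.
  apply (Rmult_le_reg_r (A * q * Q)); [repeat apply Rmult_lt_0_compat; lra |].
  replace (g / (A * q) * (A * q * Q)) with (g * Q) by (field; lra).
  replace ((k - / 2) / (q * Q) * (A * q * Q)) with ((k - / 2) * A) by (field; lra).
  exact Hcond.
Qed.

Lemma unit_gap_condition (g t q Q : R) :
  0 < g -> 0 <= t -> 1 <= Q < 2 * q ->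
  Rpower 2 (t + 1) * g <= Rpower Q (t - 3) -> g * Q <= / 2 * Rpower q t.
Proof.
  intros Hg Ht HQ Hlarge.
  assert (Hhalf : Rpower (Q / 2) t <= Rpower q t) by (apply Rle_Rpower_l; lra).
  assert (Hsplit : Rpower (Q / 2) t * Rpower 2 t = Q ^ 3 * Rpower Q (t - 3)).
  { rewrite Rpower_mult_distr by lra.
    replace (Q / 2 * 2) with Q by field.
    replace t with (t - 3 + INR 3) at 1 by (simpl; ring).
    rewrite Rpower_plus_nat by lra; ring. }
  rewrite Rpower_plus, Rpower_1 in Hlarge by lra.
  pose proof (Rpower_pos 2 t); pose proof (Rpower_pos (Q / 2) t).
  assert (HQ3 : Q <= Q ^ 3) by (simpl; nra).
  assert (Hkey : 2 * g * Q ^ 3 <= Rpower (Q / 2) t).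
  { apply (Rmult_le_reg_r (Rpower 2 t)); [lra |]; rewrite Hsplit; nra. }
  nra.
Qed.

Lemma Rpower_2_ge_16 (t : R) : 3 < t -> 16 <= Rpower 2 (t + 1).
Proof.
  intros Ht.
  replace 16 with (Rpower 2 (INR 4)) by (rewrite Rpower_pow by lra; simpl; ring).
  left; apply Rpower_lt; simpl; lra.
Qed.

Lemma convergent_gap_separation (g t : R) (q Q Q1 k : Z) :
  0 < g -> 3 < t -> ((k = 1 /\ Q < 2 * q)%Z \/ (2 <= k)%Z) ->
  (1 <= Q1 < q)%Z -> (q < Q)%Z ->
  g * IZR Q <= Rpower (IZR Q1) t ->
  Rpower 2 (t + 1) * g <= Rpower (IZR Q) (t - 3) ->
  g / Rpower (IZR q) (t + 1) + g / Rpower (IZR Q) (t + 1) + 2 * g / Rpower (IZR Q) (t - 1)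
  < IZR k / (IZR q * IZR Q).
Proof.
  intros Hg Ht Hk [HQ1 HQ1q] HqQ Hdioph Hlarge.
  apply IZR_le in HQ1; apply IZR_lt in HQ1q; apply IZR_lt in HqQ.
  assert (Hcond : g * IZR Q <= (IZR k - / 2) * Rpower (IZR q) t).
  { destruct Hk as [[-> H2q] | Hk2].
    - apply IZR_lt in H2q; rewrite mult_IZR in H2q.
      replace (IZR 1 - / 2) with (/ 2) by (simpl; field).
      apply unit_gap_condition; lra.
    - apply IZR_le in Hk2.
      assert (Rpower (IZR Q1) t <= Rpower (IZR q) t) by (apply Rle_Rpower_l; lra).
      pose proof (Rpower_pos (IZR q) t); nra. }
  pose proof (main_term_le g t (IZR q) (IZR Q) (IZR k) ltac:(lra) ltac:(lra) Hcond).
  pose proof (Rpower_2_ge_16 t Ht).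
  pose proof (gap_tail_lt g t (IZR q) (IZR Q) Hg ltac:(lra) ltac:(nra)).
  assert (IZR k / (IZR q * IZR Q) = (IZR k - / 2) / (IZR q * IZR Q) + / (2 * (IZR q * IZR Q)))
    by (field; lra).
  lra.
Qed.

Theorem lemma2 :
  forall (gamma tau alpha : R),
    0 < gamma -> 3 < tau -> Dgt gamma tau alpha ->
    exists N1 : nat, (1 <= N1)%nat /\
      forall n : nat, Nat.Even n -> (N1 < n)%nat ->
      forall (p : Z) (q : nat), (1 <= q)%nat ->
        let pn := IZR (cf_p alpha n) / IZR (cf_q alpha n) in
        let qn2 := IZR (cf_q alpha (n + 2)) in
        let pn2 := IZR (cf_p alpha (n + 2)) / qn2 in
        pn < IZR p / INR q < pn2 ->
        INR q < qn2 ->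
        IZR p / INR q + gamma / Rpower (INR q) (tau + 1)
          < pn2 - gamma / Rpower qn2 (tau + 1) - 2 * gamma / Rpower qn2 (tau - 1).
Proof.
  intros g t al Hg Ht HD.
  pose proof (proj1 HD) as Hal.
  destruct (Rpower_eventually_ge (Rpower 2 (t + 1) * g) (t - 3)) as [N HN];
    [pose proof (Rpower_pos 2 (t + 1)); nra | lra |].
  exists (S N); split; [lia |].
  intros n Hev Hn p q Hq; cbv zeta; intros [Hlo Hhi] HqQ.
  replace (n + 2)%nat with (S (S n)) in * by lia.
  assert (D0 : cf_det al n = 1%Z)
    by (rewrite cf_det_parity, (proj2 (Nat.even_spec n) Hev); reflexivity).
  assert (D1 : cf_det al (S n) = (-1)%Z) by (rewrite cf_det_S, D0; reflexivity).
  unfold cf_det in D0, D1.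
  pose proof (cf_q_pos al Hal n); pose proof (cf_q_pos al Hal (S n)).
  pose proof (cf_q_ge_index al Hal (S (S n)) (Dgt_cf_x_pos g t al Hg HD)).
  rewrite INR_IZR_INZ in *.
  apply IZR_frac_lt in Hlo, Hhi; try lia; apply lt_IZR in HqQ.
  destruct (convergent_gap_numerator (cf_p al n) (cf_q al n) (cf_p al (S n)) (cf_q al (S n))
              (cf_p al (S (S n))) (cf_q al (S (S n))) p (Z.of_nat q))
    as [HQ1q Hk]; try lia.
  assert (Hlarge : Rpower 2 (t + 1) * g <= Rpower (IZR (cf_q al (S (S n)))) (t - 3)).
  { apply HN; apply IZR_lt; lia. }
  pose proof (convergent_gap_separation g t _ _ (cf_q al (S n)) _ Hg Ht Hk
                ltac:(lia) ltac:(lia) (Dgt_convergent_bound g t al Hg HD (S n)) Hlarge).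
  pose proof (IZR_frac_sub p (Z.of_nat q) (cf_p al (S (S n))) (cf_q al (S (S n)))
                ltac:(lia) ltac:(lia)).
  lra.
Qed.
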